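(* Let $n\ge 1$ and let $G$ be a subgame with $|G|\le n$. For integers $d\ge 0$, $\ell\ge 0$, let $R(d,\ell)$ be the maximal total number of calls to $\mathrm{Solve}_\mathsf{E}$ and $\mathrm{Solve}_\mathsf{O}$ of Algorithm 2 (including the initial call) performed during an execution of $\mathrm{Solve}_\mathsf{E}(G,d,p_\mathsf{E},p_\mathsf{O})$ if $d$ is even, or of $\mathrm{Solve}_\mathsf{O}(G,d,p_\mathsf{O},p_\mathsf{E})$ if $d$ is odd, over all such subgames $G$ with priorities at most $d$ and all integers $p_\mathsf{E},p_\mathsf{O}\ge1$ with $\lfloor\log_2 p_\mathsf{E}\rfloor+\lfloor\log_2 p_\mathsf{O}\rfloor=\ell$. Then $R(d,\ell)\le 2\,n^{\ell}\binom{d+\ell}{\ell}-1$.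
   Context: A parity game is $\mathcal{G}=(V,V_\mathsf{E},E,\pi)$: $(V,E)$ a finite directed graph without self-loops, every vertex having a successor; $\pi\colon V\to\{1,\dots,d\}$ positive priorities; $V_\mathsf{E}$ Even's vertices, $V_\mathsf{O}=V\setminus V_\mathsf{E}$ Odd's vertices. A subgame is given by $G\subseteq V$ in which every vertex has a successor in $G$. $\mathrm{Attr}_\wp(S,G)$ is the set of vertices from which player $\wp$ has a strategy in $G$ agreeing only with plays reaching $S$. Algorithm 2. $\mathrm{Solve}_\mathsf{E}(G,d,p_\mathsf{E},p_\mathsf{O})$ (for even $d$): if $G=\emptyset$ or $p_\mathsf{E}\le 1$, return $\emptyset$. Otherwise: repeat $\{N_d:=\{v\in G:\pi(v)=d\}$; $H:=G\setminus\mathrm{Attr}_\mathsf{E}(N_d,G)$; $W_\mathsf{O}:=\mathrm{Solve}_\mathsf{O}(H,d-1,\lfloor p_\mathsf{O}/2\rfloor,p_\mathsf{E})$; $G:=G\setminus\mathrm{Attr}_\mathsf{O}(W_\mathsf{O},G)\}$ until $W_\mathsf{O}=\emptyset$. Then (with $H$ from the last repeat iteration) $W_\mathsf{O}:=\mathrm{Solve}_\mathsf{O}(H,d-1,p_\mathsf{O},p_\mathsf{E})$; $G:=G\setminus\mathrm{Attr}_\mathsf{O}(W_\mathsf{O},G)$. Then while $W_\mathsf{O}\ne\emptyset$: $\{N_d:=\{v\in G:\pi(v)=d\}$; $H:=G\setminus\mathrm{Attr}_\mathsf{E}(N_d,G)$; $W_\mathsf{O}:=\mathrm{Solve}_\mathsf{O}(H,d-1,\lfloor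 p_\mathsf{O}/2\rfloor,p_\mathsf{E})$; $G:=G\setminus\mathrm{Attr}_\mathsf{O}(W_\mathsf{O},G)\}$. Return $G$. $\mathrm{Solve}_\mathsf{O}(G,d,p_\mathsf{O},p_\mathsf{E})$ (for odd $d$) is the dual, obtained by swapping the roles of Even and Odd: it returns $\emptyset$ if $G=\emptyset$ or $p_\mathsf{O}\le 1$; otherwise it uses $H:=G\setminus\mathrm{Attr}_\mathsf{O}(N_d,G)$, $W_\mathsf{E}:=\mathrm{Solve}_\mathsf{E}(H,d-1,\lfloor p_\mathsf{E}/2\rfloor,p_\mathsf{O})$ in both loops, $W_\mathsf{E}:=\mathrm{Solve}_\mathsf{E}(H,d-1,p_\mathsf{E},p_\mathsf{O})$ in the middle step, and updates $G:=G\setminus\mathrm{Attr}_\mathsf{E}(W_\mathsf{E},G)$. *)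

From mathcomp Require Import all_boot.
Set Implicit Arguments. Unset Strict Implicit. Unset Printing Implicit Defensive.

Section ParityGames.
Variables (T : finType) (VE : {set T}) (E : rel T) (pi : T -> nat).

(* Player encoding: [false] = Even, [true] = Odd. *)
Definition owned (odd_player : bool) : {set T} := if odd_player then ~: VE else VE.

Definition subgame (G : {set T}) : Prop :=
  forall v, v \in G -> exists w, E v w && (w \in G).

Definition attr_step (pl : bool) (G A : {set T}) : {set T} :=
  A :|: [set v in G | if v \in owned pl
                      then [exists w, [&& E v w, w \in G & w \in A]]
                      else [forall w, (E v w && (w \in G)) ==> (w \in A)]].

(* Attr_pl(S, G): least fixpoint, reached after at most #|T| steps. *)
Definition attr (pl : bool) (S G : {set T}) : {set T} :=
  iter #|T| (attr_step pl G) (S :&: G).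

(* H := G \ Attr_pl(N_d, G), pl the player of parity d. *)
Definition remove_top (d : nat) (G : {set T}) : {set T} :=
  G :\: attr (odd d) [set v in G | pi v == d] G.

(* The body "N_d := ..; H := ..; W := f H; G := G \ Attr_opp(W, G)" repeated
   until W = set0 (with fuel). Returns (final G, last H, accumulated count). *)
Fixpoint rep_loop (d : nat) (f : {set T} -> {set T} * nat) (fuel : nat)
    (G : {set T}) (c : nat) : {set T} * {set T} * nat :=
  match fuel with
  | 0 => (G, remove_top d G, c)
  | fuel'.+1 =>
    let H := remove_top d G in
    let W := (f H).1 in
    let G' := G :\: attr (~~ odd d) W G in
    if W == set0 then (G', H, c + (f H).2)
    else rep_loop d f fuel' G' (c + (f H).2)
  end.

(* solve d G pa pb = Solve_E(G,d,pa,pb) if d is even, Solve_O(G,d,pa,pb) if d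
   is odd (pa is the parameter of the player of parity d, pb the opponent's).
   Returns the computed set together with the total number of calls made
   (including this one). The case d = 0 with G nonempty never occurs when
   priorities are positive and at most d. *)
Fixpoint solve (d : nat) (G : {set T}) (pa pb : nat) {struct d}
    : {set T} * nat :=
  if (G == set0) || (pa <= 1) then (set0, 1) else
  match d with
  | 0 => (set0, 1)
  | d'.+1 =>
    let half := fun H => solve d' H (pb %/ 2) pa in
    let full := fun H => solve d' H pb pa in
    let '(G1, H1, c1) := rep_loop d half #|T|.+1 G 0 in
    let W2 := (full H1).1 in
    let c2 := (full H1).2 in
    let G2 := G1 :\: attr (~~ odd d) W2 G1 in
    if W2 == set0 then (G2, 1 + c1 + c2)
    else let '(G3, _, c3) := rep_loop d half #|T|.+1 G2 0 in
         (G3, 1 + c1 + c2 + c3)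
  end.

Definition num_calls (d : nat) (G : {set T}) (pE pO : nat) : nat :=
  if odd d then (solve d G pO pE).2 else (solve d G pE pO).2.

End ParityGames.

From mathcomp Require Import all_boot zify.

Set Implicit Arguments.
Unset Strict Implicit.
Unset Printing Implicit Defensive.

(* In a call with parameters (pa, pb) with pa >= 2 the loops make
   "half" recursive calls, with log-sum one smaller, and one "full" recursive
   call with the same log-sum.  Each loop iteration whose recursive call
   returns a nonempty set removes at least one vertex (its attractor), so by an
   amortisation argument both loops together make at most one half call per
   vertex plus one extra call.  The theorem then reduces to the binomial
   inequality 2 + n B(d,l) + B(d,l+1) <= B(d+1,l+1) for B = call_bound n.
   Finally the case n = 1 is trivial: a subgame with at most one vertex is
   empty since the graph has no self-loops. *)

Section SolverCalls.
Variables (T : finType) (VE : {set T}) (E : rel T) (pi : T -> nat).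

Lemma attr_sup pl (S G : {set T}) : S :&: G \subset attr VE E pl S G.
Proof.
rewrite /attr; elim: #|T| => //= k IH.
exact: subset_trans IH (subsetUl _ _).
Qed.

(* Removing the attractor of a nonempty set W from G yields a set strictly
   smaller than any X containing both G and W: this is what makes the loops
   of the solver progress. *)
Lemma remove_attr_proper pl (W G X : {set T}) :
  W != set0 -> W \subset X -> G \subset X -> G :\: attr VE E pl W G \proper X.
Proof.
move=> /set0Pn [w wW] sWX sGX; apply/properP.
split; first exact: subset_trans (subsetDl _ _) sGX.
exists w; first exact: subsetP sWX w wW.
rewrite inE negb_and negbK; case wG: (w \in G); last by rewrite orbT.
by rewrite (subsetP (attr_sup _ _ _)) // inE wW wG.
Qed.

Lemma rep_loop_sub d f fuel (G : {set T}) c :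
  (rep_loop VE E pi d f fuel G c).1.1 \subset G.
Proof.
elim: fuel G c => [|k IH] G c /=; first exact: subxx.
case: ifP => _; first exact: subsetDl.
exact: subset_trans (IH _ _) (subsetDl _ _).
Qed.

Lemma rep_loop_last_sub d f fuel (G : {set T}) c :
  (rep_loop VE E pi d f fuel G c).1.2 \subset G.
Proof.
elim: fuel G c => [|k IH] G c /=; first exact: subsetDl.
case: ifP => _; first exact: subsetDl.
exact: subset_trans (IH _ _) (subsetDl _ _).
Qed.

Section LoopCost.
Variables (d h : nat) (f : {set T} -> {set T} * nat) (G0 : {set T}).
Hypothesis f_sub : forall H : {set T}, H \subset G0 -> (f H).1 \subset H.
Hypothesis f_cost : forall H : {set T}, H \subset G0 -> (f H).2 <= h.
Hypothesis f_empty : (f set0).2 <= 1.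

(* Amortised cost: GL is the set on which the last body iteration ran.
   Every earlier iteration costs at most h and removes a vertex, the last one
   costs at most h, or at most 1 if it ran on the empty set. *)
Lemma rep_loop_cost fuel (G : {set T}) c : G \subset G0 ->
  let: (G', H', c') := rep_loop VE E pi d f fuel G c in
  exists2 GL : {set T}, [/\ G' \subset GL, GL \subset G & H' \subset GL] &
    c' + h * #|GL| <= c + h * #|G| + (if GL == set0 then 1 else h).
Proof.
elim: fuel G c => [|k IH] G c sG0 /=.
  exists G; [by rewrite subxx subsetDl | lia].
set H := remove_top VE E pi d G.
have sHG : H \subset G by exact: subsetDl.
have cH := f_cost (subset_trans sHG sG0).
case: eqP => W0.
  exists G; first by rewrite subsetDl subxx.
  case: eqP => [G_empty | _]; last lia.
  have H_empty : H = set0 by apply/eqP; rewrite -subset0 -G_empty.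
  by move: f_empty; rewrite -H_empty; lia.
set G' := G :\: _.
have sG'G : G' \subset G by exact: subsetDl.
have shrink : #|G'| < #|G|.
  apply/proper_card/remove_attr_proper => //; first exact/eqP.
  exact: subset_trans (f_sub (subset_trans sHG sG0)) sHG.
have := IH G' (c + (f H).2) (subset_trans sG'G sG0).
case: (rep_loop _ _ _ _ _ _ _ _) => [[G'' H''] c''] [GL [s1 s2 s3] cost].
exists GL; first by rewrite s1 s3 (subset_trans s2 sG'G).
have : h * #|G'| + h <= h * #|G| by rewrite -mulnSr leq_mul2l shrink orbT.
lia.
Qed.

Lemma rep_loop_cost_le fuel (G : {set T}) c : G \subset G0 ->
  (rep_loop VE E pi d f fuel G c).2 <= c + h * #|G| + 1.
Proof.
move=> /(@rep_loop_cost fuel G c).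
case: (rep_loop _ _ _ _ _ _ _ _) => [[G' H'] c'] [GL _] /=.
case: eqP => [_ | /eqP GLn]; first lia.
have : h <= h * #|GL| by rewrite -{1}(muln1 h) leq_mul2l card_gt0 GLn orbT.
lia.
Qed.

Lemma rep_loop_restart_cost pl fuel fuel' (G G1 H1 W : {set T}) c1 :
  G \subset G0 -> rep_loop VE E pi d f fuel G 0 = (G1, H1, c1) ->
  W != set0 -> W \subset H1 ->
  c1 + (rep_loop VE E pi d f fuel' (G1 :\: attr VE E pl W G1) 0).2
    <= h * #|G| + 1.
Proof.
move=> sG0 run Wn sWH1; have := @rep_loop_cost fuel G 0 sG0.
rewrite run => -[GL [s1 s2 s3] cost].
have pr : G1 :\: attr VE E pl W G1 \proper GL.
  exact: remove_attr_proper Wn (subset_trans sWH1 s3) s1.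
have GLn : GL != set0.
  by apply/set0Pn; case/properP: pr => _ [w wGL _]; exists w.
rewrite (negbTE GLn) in cost.
have sG2 := subset_trans (proper_sub pr) (subset_trans s2 sG0).
have cost2 := @rep_loop_cost_le fuel' _ 0 sG2.
have : h * #|G1 :\: attr VE E pl W G1| + h <= h * #|GL|.
  by rewrite -mulnSr leq_mul2l proper_card ?orbT.
lia.
Qed.

End LoopCost.

Lemma solve_unfold d (G : {set T}) pa pb : solve VE E pi d.+1 G pa pb =
  if (G == set0) || (pa <= 1) then (set0, 1) else
    let half := fun H => solve VE E pi d H (pb %/ 2) pa in
    let full := fun H => solve VE E pi d H pb pa in
    let '(G1, H1, c1) := rep_loop VE E pi d.+1 half #|T|.+1 G 0 in
    let W2 := (full H1).1 in
    let c2 := (full H1).2 in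
    let G2 := G1 :\: attr VE E (~~ odd d.+1) W2 G1 in
    if W2 == set0 then (G2, 1 + c1 + c2)
    else let '(G3, _, c3) := rep_loop VE E pi d.+1 half #|T|.+1 G2 0 in
         (G3, 1 + c1 + c2 + c3).
Proof. by []. Qed.

Lemma solve_trivial d (G : {set T}) pa pb :
  (G == set0) || (pa <= 1) -> solve VE E pi d G pa pb = (set0, 1).
Proof. by case: d => [|d] /= ->. Qed.

Lemma solve_sub d (G : {set T}) pa pb : (solve VE E pi d G pa pb).1 \subset G.
Proof.
case: d => [|d]; first by rewrite /=; case: ifP; rewrite sub0set.
rewrite solve_unfold; case: ifP => _; first by rewrite sub0set.
cbv zeta; set half := fun H => _.
have := rep_loop_sub d.+1 half #|T|.+1 G 0.
case: (rep_loop _ _ _ _ _ _ _ _) => [[G1 H1] c1] sG1; rewrite /= in sG1.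
case: ifP => _; first exact: subset_trans (subsetDl _ _) sG1.
set G2 := G1 :\: _; have := rep_loop_sub d.+1 half #|T|.+1 G2 0.
case: (rep_loop _ _ _ _ _ _ _ _) => [[G3 H3] c3] sG3.
exact: subset_trans sG3 (subset_trans (subsetDl _ _) sG1).
Qed.

(* A subgame with at most one vertex is empty: its vertex would need a
   successor inside it, i.e. a self-loop. *)
Lemma small_subgame_empty (G : {set T}) : (forall v, ~~ E v v) ->
  subgame E G -> #|G| <= 1 -> G = set0.
Proof.
move=> no_loop G_sub G_le1; apply/eqP/set0Pn => [[v vG]].
have [w /andP [evw wG]] := G_sub v vG.
have w_v : w = v := card_le1_eqP G_le1 v w vG wG.
by move: (no_loop v); rewrite -{2}w_v evw.
Qed.

End SolverCalls.

Definition call_bound (n d l : nat) : nat := 2 * n ^ l * 'C(d + l, l) - 1.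

Lemma call_bound_gt0 n d l : 0 < n -> 0 < call_bound n d l.
Proof.
move=> n_gt0; rewrite /call_bound.
have : 0 < 'C(d + l, l) by rewrite bin_gt0 leq_addl.
have : 0 < n ^ l by rewrite expn_gt0 n_gt0.
nia.
Qed.

(* The recurrence satisfied by the bound: the call itself, an extra call on
   the empty game, n half calls and one full call fit in the budget. *)
Lemma call_bound_step n d l : 2 <= n ->
  2 + n * call_bound n d l + call_bound n d l.+1 <= call_bound n d.+1 l.+1.
Proof.
move=> n_ge2; rewrite /call_bound.
have -> : d.+1 + l.+1 = (d + l.+1).+1 by lia.
rewrite binS expnS.
have mono : 'C(d + l, l) <= 'C(d + l.+1, l) by apply: leq_bin2l; lia.
have a_gt0 : 0 < 'C(d + l, l) by rewrite bin_gt0 leq_addl.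
have b_gt0 : 0 < 'C(d + l.+1, l.+1) by rewrite bin_gt0 leq_addl.
have x_gt0 : 0 < n ^ l by rewrite expn_gt0; lia.
set X := n ^ l in x_gt0 *; set a := 'C(d + l, l) in mono a_gt0 *.
set a' := 'C(d + l.+1, l) in mono *; set b := 'C(d + l.+1, l.+1) in b_gt0 *.
have mono' : n * X * a <= n * X * a' by rewrite leq_mul2l mono orbT.
have : 1 <= n * X * a by rewrite !muln_gt0 x_gt0 a_gt0; lia.
have : 1 <= n * X * b by rewrite !muln_gt0 x_gt0 b_gt0; lia.
nia.
Qed.

Section CallBound.
Variables (T : finType) (VE : {set T}) (E : rel T) (pi : T -> nat).
Variables (n : nat) (n_ge2 : 2 <= n).

Let call_bound_pos d l : 1 <= call_bound n d l.
Proof. by apply: call_bound_gt0; lia. Qed.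

Lemma solve_bound_step d :
  (forall l (G : {set T}) pa pb, #|G| <= n ->
    trunc_log 2 pa + trunc_log 2 pb <= l ->
    (solve VE E pi d G pa pb).2 <= call_bound n d l) ->
  forall l (G : {set T}) pa pb, #|G| <= n ->
    trunc_log 2 pa + trunc_log 2 pb <= l ->
    (solve VE E pi d.+1 G pa pb).2 <= call_bound n d.+1 l.
Proof.
move=> IH l G pa pb Gn Hl; rewrite solve_unfold.
case: ifP => [_ | /norP [_]]; first exact: call_bound_pos.
rewrite -ltnNge => pa_ge2.
have pa_log_gt0 : 0 < trunc_log 2 pa by rewrite trunc_log_gt0.
case: l Hl => [|l] Hl; first lia.
set half := fun H => solve VE E pi d H (pb %/ 2) pa.
set h := call_bound n d l.
(* Half calls: the parameter pb is halved, so the log-sum drops by one. *)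
have half_cost (H : {set T}) : H \subset G -> (half H).2 <= h.
  (* If pb <= 1 then pb / 2 <= 1 and the call returns at once. *)
  move=> sHG; have [pb_le1 | pb_ge2] := leqP pb 1.
    rewrite /half solve_trivial ?call_bound_pos //.
    by rewrite (leq_trans (leq_div _ _)) ?orbT.
  apply: IH; first exact: leq_trans (subset_leq_card sHG) Gn.
  by rewrite (trunc_log2S pb_ge2) -divn2 in Hl; lia.
have half_sub (H : {set T}) : H \subset G -> (half H).1 \subset H.
  by move=> _; apply: solve_sub.
have half_empty : (half set0).2 <= 1 by rewrite /half solve_trivial ?eqxx.
(* The full call keeps the log-sum l + 1. *)
have full_cost (H : {set T}) : H \subset G ->
    (solve VE E pi d H pb pa).2 <= call_bound n d l.+1.
  by move=> sHG; apply: IH; [exact: leq_trans (subset_leq_card sHG) Gn | lia].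
have hG : h * #|G| <= h * n by rewrite leq_mul2l Gn orbT.
have step := call_bound_step d l n_ge2.
cbv zeta; case run1: (rep_loop _ _ _ _ _ _ _ _) => [[G1 H1] c1].
have cost1 := rep_loop_cost_le VE E pi d.+1 half_sub half_cost half_empty
  #|T|.+1 0 (subxx G).
have sH1G := rep_loop_last_sub VE E pi d.+1 half #|T|.+1 G 0.
rewrite run1 /= in cost1 sH1G.
have cost2 := full_cost H1 sH1G.
case: ifP => W2_empty; first by rewrite /=; lia.
(* The full call found a nonempty set: the restarted loop shares the
   budget of the first one. *)
set G2 := G1 :\: _; case run2: (rep_loop _ _ _ _ _ _ _ _) => [[G3 H3] c3].
have := rep_loop_restart_cost half_sub half_cost half_empty (~~ odd d.+1)
  #|T|.+1 (subxx G) run1 (negbT W2_empty) (solve_sub _ _ _ _ _ _ _).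
rewrite -/G2 run2 /=; lia.
Qed.

Lemma solve_bound d l (G : {set T}) pa pb : #|G| <= n ->
  trunc_log 2 pa + trunc_log 2 pb <= l ->
  (solve VE E pi d G pa pb).2 <= call_bound n d l.
Proof.
elim: d l G pa pb => [|d IH] l G pa pb; last exact: solve_bound_step.
by move=> _ _ /=; case: ifP => _; apply: call_bound_pos.
Qed.

End CallBound.

Theorem mainTheorem7 (T : finType) (VE : {set T}) (E : rel T) (pi : T -> nat)
    (no_self_loop : forall v, ~~ E v v)
    (has_succ : forall v, exists w, E v w)
    (pi_pos : forall v, 0 < pi v)
    (n : nat) (n_ge1 : 1 <= n)
    (G : {set T}) (G_sub : subgame E G) (G_card : #|G| <= n)
    (d l pE pO : nat) (G_prio : forall v, v \in G -> pi v <= d)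
    (pE_ge1 : 1 <= pE) (pO_ge1 : 1 <= pO)
    (Hl : trunc_log 2 pE + trunc_log 2 pO = l) :
  num_calls VE E pi d G pE pO <= 2 * n ^ l * 'C(d + l, l) - 1.
Proof.
have [n_ge2 | n_lt2] := leqP 2 n.
  rewrite /num_calls; case: ifP => _; apply: solve_bound => //; lia.
(* With n = 1 the game is empty and the solver makes a single call. *)
have -> : G = set0 by apply: small_subgame_empty no_self_loop G_sub _; lia.
rewrite /num_calls !solve_trivial ?eqxx //.
by case: ifP => _; apply: call_bound_gt0.
Qed.
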